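(* If $Y$ is a finite connected simple undirected graph on $n$ vertices, then $\kappa(Y)\leq\tfrac1n\,\alpha(Y)$.
   Context: $\alpha(Y)$ is the number of acyclic orientations of $Y$. A click at a vertex $x$ that is a source of an orientation reverses all edges incident to $x$, making $x$ a sink. Two acyclic orientations are $\kappa$-equivalent if one can be transformed into the other by a finite sequence of clicks; $\kappa(Y)$ is the number of $\kappa$-equivalence classes. *)

From mathcomp Require Import all_boot all_algebra.
Set Implicit Arguments. Unset Strict Implicit. Unset Printing Implicit Defensive.

Section Orientations.
Variables (T : finType) (e : rel T).

Definition simple_graph := symmetric e /\ irreflexive e.
Definition connected_graph := (0 < #|T|)%N /\ forall x y : T, connect e x y.

Definition is_orientation (A : {set T * T}) : bool :=
  [forall x : T, forall y : T,
     (((x, y) \in A) ==> e x y) &&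
     (e x y ==> (((x, y) \in A) (+) ((y, x) \in A)))].

Definition arc (A : {set T * T}) : rel T := fun x y => (x, y) \in A.

Definition acyclic_orientation (A : {set T * T}) : bool :=
  is_orientation A &&
  [forall x : T, forall y : T, ((x, y) \in A) ==> ~~ connect (arc A) y x].

Definition alpha : nat := #|[set A : {set T * T} | acyclic_orientation A]|.

Definition is_source (A : {set T * T}) (x : T) : bool :=
  [forall y : T, (y, x) \notin A].

Definition click (A : {set T * T}) (x : T) : {set T * T} :=
  [set p : T * T | if (p.1 == x) || (p.2 == x) then (p.2, p.1) \in A
                   else p \in A].

Definition click_step (A B : {set T * T}) : bool :=
  acyclic_orientation A &&
  [exists x : T, is_source A x && (B == click A x)].

Definition kappa_rel (A B : {set T * T}) : bool :=
  click_step A B || click_step B A.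

Definition kappa : nat :=
  n_comp kappa_rel [pred A : {set T * T} | acyclic_orientation A].

End Orientations.

From Pilot Require Import Defs.
From mathcomp Require Import all_boot all_algebra.
Import GRing.Theory Num.Theory.
Set Implicit Arguments. Unset Strict Implicit. Unset Printing Implicit Defensive.

(* Every kappa-class contains, for each vertex v, an acyclic orientation in
   which v reaches every vertex; such an orientation determines v, so each
   class has at least n members.  To reach it from an acyclic orientation A,
   let U be the set of vertices not reachable from v.  U is closed under
   predecessors, so reversing all edges between U and its complement is a
   sequence of clicks (at sources of U, one at a time); it keeps every path
   out of v and, by connectivity, turns some edge entering U towards U, so
   strictly more vertices become reachable. *)

Section Orientations.
Variables (T : finType) (e : rel T).

Local Notation acyclic := (acyclic_orientation e).
Local Notation K := (kappa_rel e).

Definition flip (A : {set T * T}) (U : {set T}) : {set T * T} :=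
  [set p : T * T | if (p.1 \in U) != (p.2 \in U) then (p.2, p.1) \in A
                   else p \in A].

Definition reach (A : {set T * T}) (v : T) : {set T} :=
  [set w | connect (Defs.arc A) v w].

Lemma click_flip1 A x : click A x = flip A [set x].
Proof.
apply/setP => -[a b]; rewrite !inE /=.
by case: (eqVneq a x) => [->|]; case: (eqVneq b x) => [->|].
Qed.

Lemma flip0 A : flip A set0 = A.
Proof. by apply/setP => -[a b]; rewrite !inE. Qed.

Lemma flip_flip1 A (U : {set T}) x :
  x \in U -> flip (flip A [set x]) (U :\ x) = flip A U.
Proof.
move=> xU; apply/setP => -[a b]; rewrite !inE /=.
case: (eqVneq a x) => [->|ax]; case: (eqVneq b x) => [->|bx] //=; rewrite ?xU //=.
- by case: (b \in U).
- by case: (a \in U).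
Qed.

Lemma orientationP A : is_orientation e A -> forall a b,
  ((a, b) \in A -> e a b) /\ (e a b -> ((a, b) \in A) (+) ((b, a) \in A)).
Proof.
move=> /forallP orA a b; have /forallP/(_ b)/andP[arc_e e_xor] := orA a.
by split; apply/implyP.
Qed.

Lemma acyclicP A : acyclic A ->
  forall a b, (a, b) \in A -> ~~ connect (Defs.arc A) b a.
Proof. by case/andP=> _ /forallP acA a b; have /forallP/(_ b)/implyP := acA a. Qed.

Lemma acyclic_connect_antisym A v w : acyclic A ->
  connect (Defs.arc A) v w -> connect (Defs.arc A) w v -> v = w.
Proof.
move=> acA /connectP[[|c p] /= pth ->] // wv.
case/andP: pth => vc cp.
have cv : connect (Defs.arc A) c v.
  by apply: connect_trans wv; apply/connectP; exists p.
by have := acyclicP acA vc; rewrite cv.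
Qed.

Lemma connect_from_sink (r : rel T) x y :
  (forall z, ~~ r x z) -> connect r x y -> y = x.
Proof.
by move=> sink /connectP[[|c p] //= /andP[xc _]]; rewrite (negbTE (sink c)) in xc.
Qed.

Lemma connect_avoid_sink (r s : rel T) x y z :
  (forall t, ~~ r x t) -> (forall a b, r a b -> b != x -> s a b) ->
  connect r y z -> z != x -> connect s y z.
Proof.
move=> sink r_s /connectP[p]; elim: p y => [|c p IH] y /=; first by move=> _ ->.
case/andP=> yc cp zp zx.
have cx : c != x.
  apply: contra_neq zx => cx; rewrite zp.
  by apply: (connect_from_sink sink); apply/connectP; exists p; rewrite -?cx.
exact: connect_trans (connect1 (r_s _ _ yc cx)) (IH c cp zp zx).
Qed.

Lemma connect_in_closed (r s : rel T) (R : {pred T}) x y :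
  (forall a b, a \in R -> r a b -> (b \in R) && s a b) ->
  x \in R -> connect r x y -> connect s x y.
Proof.
move=> rRs xR /connectP[p]; elim: p x xR => [|c p IH] x xR /=; first by move=> _ ->.
case/andP=> xc cp yp; case/andP: (rRs x c xR xc) => cR xc'.
exact: connect_trans (connect1 xc') (IH c cR cp yp).
Qed.

Lemma path_cross_edge (r : rel T) (U : {set T}) x p :
  path r x p -> x \notin U -> last x p \in U ->
  exists y z, [/\ r y z, y \notin U & z \in U].
Proof.
elim: p x => [|c p IH] x /=; first by move=> _ /negbTE ->.
case/andP=> xc cp xU lU; case: (boolP (c \in U)) => cU; first by exists x, c.
exact: IH cp cU lU.
Qed.

Lemma acyclic_has_source_in A (U : {set T}) : acyclic A -> U != set0 ->
  exists2 x, x \in U & forall y, y \in U -> (y, x) \notin A.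
Proof.
move=> acA /set0Pn[x0 x0U].
pose ancestors z := #|[set y | connect (Defs.arc A) y z]|.
have [x xU xmin] := arg_minnP ancestors x0U; exists x => // y yU.
apply/negP => yx; have := xmin y yU; apply/negP; rewrite -ltnNge.
apply: proper_card; apply/properP; split.
  by apply/subsetP=> z; rewrite !inE => zy; exact: connect_trans zy (connect1 yx).
by exists x; rewrite inE ?connect0 //; apply: acyclicP acA _ _ yx.
Qed.

Hypothesis e_sym : symmetric e.

Lemma flip_orientation A U : is_orientation e A -> is_orientation e (flip A U).
Proof.
move=> /orientationP orA; apply/forallP=> a; apply/forallP=> b; rewrite !inE /=.
have [ab_e ab_xor] := orA a b; have [ba_e _] := orA b a.
rewrite (eq_sym (b \in U)); case: ifP => _; apply/andP; split; apply/implyP => //.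
- by move/ba_e; rewrite e_sym.
- by move/ab_xor; rewrite addbC.
Qed.

Lemma click_acyclic A x : acyclic A -> is_source A x -> acyclic (click A x).
Proof.
move=> acA /forallP src; set B := click A x.
have sink z : ~~ Defs.arc B x z by rewrite /Defs.arc inE /= eqxx /= src.
have B_A a b : Defs.arc B a b -> b != x -> (a, b) \in A.
  rewrite /Defs.arc inE /= => ab bx; rewrite (negbTE bx) orbF in ab.
  by case: eqP ab => [->|//]; rewrite (negbTE (src b)).
apply/andP; split.
  by case/andP: acA => orA _; rewrite /B click_flip1 flip_orientation.
apply/forallP=> a; apply/forallP=> b; apply/implyP=> ab; apply/negP=> ba.
have ax : a != x by apply: contraTneq ab => ->; exact: sink.
have bx : b != x.
  by apply: contra_neq ax => bx; rewrite bx in ba; exact: connect_from_sink sink ba.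
have := acyclicP acA (B_A _ _ ab bx).
by rewrite (connect_avoid_sink sink B_A ba ax).
Qed.

Lemma kappa_rel_acyclic A B : K A B -> acyclic A /\ acyclic B.
Proof.
case/orP=> /andP[acA /existsP[x /andP[srcx /eqP ->]]];
  by split => //; exact: click_acyclic.
Qed.

Lemma connect_kappa_acyclic A B : connect K A B -> acyclic A -> acyclic B.
Proof.
have closedK : closed K acyclic.
  by move=> A' B' /kappa_rel_acyclic[acA acB]; rewrite /in_mem /= acA acB.
by move=> AB acA; have := closed_connect closedK AB; rewrite /in_mem /= acA => <-.
Qed.

Lemma connect_kappa_sym : connect_sym K.
Proof. by apply: sym_connect_sym => A B; rewrite /kappa_rel orbC. Qed.

Lemma connect_kappa_flip A (U : {set T}) : acyclic A ->
  (forall y z, (y, z) \in A -> z \in U -> y \in U) -> connect K A (flip A U).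
Proof.
move Un: #|U| => n; elim: n U A Un => [|n IH] U A Un acA predU.
  by rewrite (cards0_eq Un) flip0 connect0.
have U0 : U != set0 by rewrite -card_gt0 Un.
have [x xU xmin] := acyclic_has_source_in acA U0.
have srcx : is_source A x.
  by apply/forallP=> y; apply/negP=> yx; case/negP: (xmin y (predU _ _ yx xU)).
have Ax : K A (click A x).
  by apply/orP; left; rewrite /click_step acA; apply/existsP; exists x; rewrite srcx eqxx.
apply: connect_trans (connect1 Ax) _.
rewrite click_flip1 -(flip_flip1 A xU) -click_flip1.
apply: IH; first by move: Un; rewrite (cardsD1 x) xU => -[].
  exact: click_acyclic.
move=> y z; rewrite !inE /= => yz /andP[zx zU].
have yx : y != x by apply: contraTneq yz => ->; rewrite eqxx /= (negbTE (forallP srcx z)).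
by rewrite yx /=; apply: predU zU; move: yz; rewrite (negbTE yx) (negbTE zx).
Qed.

Hypothesis e_connected : forall x y : T, connect e x y.

Lemma kappa_extend_reach A v : acyclic A -> reach A v != setT ->
  exists2 B, connect K A B & reach A v \proper reach B v.
Proof.
rewrite -subTset => acA /subsetPn[z0 _ z0_unreached].
set U := ~: reach A v.
have predU y z : (y, z) \in A -> z \in U -> y \in U.
  by move=> yz; rewrite !inE; apply: contra => vy; exact: connect_trans vy (connect1 yz).
exists (flip A U); first exact: connect_kappa_flip.
have keep : reach A v \subset reach (flip A U) v.
  apply/subsetP=> w; rewrite !inE; apply: (connect_in_closed (R := reach A v)).
  - move=> a b; rewrite !inE => va ab; have vb := connect_trans va (connect1 ab).
    by rewrite vb /Defs.arc inE /= !inE va vb.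
  - by rewrite inE connect0.
have vU : v \notin U by rewrite !inE negbK connect0.
have [p pth z0p] := connectP (e_connected v z0).
have lU : last v p \in U by rewrite -z0p inE.
have [y [z [yz yU zU]]] := path_cross_edge pth vU lU.
have vy : connect (Defs.arc A) v y by move: yU; rewrite !inE negbK.
have zy : (z, y) \in A.
  case/andP: acA => /orientationP orA _; have [_ yz_xor] := orA y z.
  move: (yz_xor yz); case: (boolP ((y, z) \in A)) => //= yzA.
  by move: zU; rewrite !inE (connect_trans vy (connect1 yzA)).
apply/properP; split => //; exists z; last by move: zU; rewrite inE.
have vy' : y \in reach (flip A U) v by apply: (subsetP keep); rewrite inE.
rewrite /reach !inE in vy' *; apply: connect_trans vy' (connect1 _).
by rewrite /Defs.arc inE /= (negbTE yU) zU.
Qed.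

Lemma kappa_rooted A v : acyclic A ->
  exists2 B, connect K A B & acyclic B && (reach B v == setT).
Proof.
have [n] := ubnP #|~: reach A v|; elim: n A => // n IH A ltUn acA.
have [reachT|reach_partial] := eqVneq (reach A v) setT.
  by exists A; rewrite ?connect0 // acA reachT eqxx.
have [B AB ltAB] := kappa_extend_reach acA reach_partial.
have ltBn : #|~: reach B v| < n.
  by rewrite -ltnS; apply: leq_trans ltUn; apply: proper_card; rewrite properC.
have [C BC acC] := IH B ltBn (connect_kappa_acyclic AB acA).
by exists C => //; exact: connect_trans AB BC.
Qed.

Lemma card_kappa_class r : acyclic r ->
  #|T| <= #|[set A | acyclic A & fingraph.root K A == fingraph.root K r]|.
Proof.
move=> acr; pose rooted v B := [&& connect K r B, acyclic B & reach B v == setT].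
pose f v := odflt r [pick B | rooted v B].
have fP v : rooted v (f v).
  rewrite /f; case: pickP => [//|none] /=.
  have [B rB /andP[acB reachB]] := kappa_rooted v acr.
  by have := none B; rewrite /rooted rB acB reachB.
have f_inj : injective f.
  move=> v w fvw; have := fP w; rewrite /rooted -fvw.
  case/and3P=> _ acB /eqP reachw; case/and3P: (fP v) => _ _ /eqP reachv.
  apply: acyclic_connect_antisym acB _ _.
    by have := in_setT w; rewrite -reachv inE.
  by have := in_setT v; rewrite -reachw inE.
rewrite -(card_imset _ f_inj); apply/subset_leq_card/subsetP=> _ /imsetP[v _ ->].
case/and3P: (fP v) => rfv acfv _; rewrite inE acfv /=.
by rewrite eq_sym; apply/eqP/(fingraph.rootP connect_kappa_sym).
Qed.

Lemma kappa_mul_card_le_alpha : kappa e * #|T| <= alpha e.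
Proof.
set R := [set A | fingraph.roots K A & acyclic A].
have kappaE : kappa e = #|R| by apply: eq_card => A; rewrite !inE.
have rootR A : acyclic A -> fingraph.root K A \in R.
  move=> acA; rewrite inE (roots_root connect_kappa_sym) /=.
  exact: connect_kappa_acyclic (connect_root _ _) acA.
have alphaE : alpha e =
    \sum_(r in R) #|[set A | acyclic A & fingraph.root K A == r]|.
  rewrite /alpha -sum1_card (partition_big (fingraph.root K) (mem R)) => [|B].
    by apply: eq_bigr => r _; rewrite -sum1_card; apply: eq_bigl => B; rewrite !inE.
  by rewrite inE => /rootR.
rewrite kappaE alphaE -sum_nat_const; apply: leq_sum => r.
rewrite inE => /andP[/eqP rootr acr]; rewrite -{1}rootr.
exact: card_kappa_class.
Qed.

End Orientations.

Local Open Scope ring_scope.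

Theorem proposition4 (T : finType) (e : rel T) :
  simple_graph e -> connected_graph e ->
  (kappa e)%:R <= (#|T|%:R)^-1 * (alpha e)%:R :> rat.
Proof.
move=> [e_sym _] [n_gt0 e_connected].
rewrite ler_pdivlMl ?ltr0n // -natrM ler_nat mulnC.
exact: kappa_mul_card_le_alpha.
Qed.
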